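(* Let $F$ be a field of prime characteristic $p$, let $1\le r\le s$, let $m\ge0$ be the smallest integer with $r\le p^m$, let $A=F[X,Y]/(X^r,Y^s)$ with $x,y$ the images of $X,Y$, and regard $A$ as a module over the subalgebra $F[x+y]$. (a) If $s\equiv0\pmod{p^m}$, then $(x+y)^s=0$, $A=\bigoplus_{i=0}^{r-1} x^iF[x+y]$, and $x^i(x+y)^{s-1}\neq 0$ for $0\leq i<r$. Consequently $\varepsilon(r,s,p)=(0,0,\dots,0)$. (b) If $\varepsilon(r,s,p)=(0,0,\dots,0)$, then $s\equiv0\pmod{p^m}$.
   Context: For a positive integer $n$, let $J_n$ denote the $n\times n$ matrix with $1$s in positions $(i,i)$ for $1\le i\le n$ and $(i,i+1)$ for $1\le i<n$, and $0$s elsewhere. For $1\le r\le s$, the Jordan canonical form of $J_r\otimes J_s$ over a field of characteristic $p$ is $J_{\lambda_1}\oplus\cdots\oplus J_{\lambda_r}$ with $\lambda_1\ge\cdots\ge\lambda_r>0$; write $\lambda(r,s,p)=(\lambda_1,\dots,\lambda_r)$. The deviation vector is $\varepsilon(r,s,p)=(\lambda_1-s,\dots,\lambda_r-s)$. *)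

From HB Require Import structures.
From mathcomp Require Import all_boot all_order all_algebra.
From mathcomp Require Import mxtens.
Set Implicit Arguments. Unset Strict Implicit. Unset Printing Implicit Defensive.
Import Order.TTheory GRing.Theory Num.Theory.
Local Open Scope ring_scope.

Section Defs.
Variable F : fieldType.

Definition jordan_mx (n : nat) : 'M[F]_n :=
  \matrix_(i < n, j < n) (((i : nat) == j) || ((j : nat) == i.+1))%:R.

(* J_r (x) J_s, the Kronecker product (row index (i,k) |-> i*s + k) *)
Definition JJ (r s : nat) : 'M[F]_(r * s) := tensmx (jordan_mx r) (jordan_mx s).

Definition jordan_blocks (lam : seq nat) :=
  mxdiag (fun i : 'I_(size lam) => jordan_mx (nth 0%N lam i)).

Definition jordan_type (n : nat) (M : 'M[F]_n) (lam : seq nat) : Prop :=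
  sorted geq lam /\ all (fun l => 0 < l)%N lam /\
  exists (P : 'M[F]_(\sum_(i < size lam) nth 0%N lam i, n))
         (Q : 'M[F]_(n, \sum_(i < size lam) nth 0%N lam i)),
    P *m Q = 1%:M /\ Q *m P = 1%:M /\ P *m M *m Q = jordan_blocks lam.

Definition deviation (s : nat) (lam : seq nat) : seq int :=
  [seq (l%:Z - s%:Z)%R | l <- lam].

(* The algebra A = F[X,Y]/(X^r, Y^s), modelled on F[X][Y] = {poly {poly F}}:
   x is the inner variable X, y the outer variable Y; equality in A is
   congruence modulo the ideal (X^r, Y^s). *)
Definition xA : {poly {poly F}} := ('X : {poly F})%:P.
Definition yA : {poly {poly F}} := 'X.

Definition congA (r s : nat) (P Q : {poly {poly F}}) : Prop :=
  exists U V : {poly {poly F}}, P - Q = xA ^+ r * U + yA ^+ s * V.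

Definition evalT (f : {poly F}) : {poly {poly F}} :=
  (map_poly (fun c : F => c%:P%:P) f).[xA + yA].

End Defs.

(* In characteristic p, (1 + X)^(p^e t) = (1 + X^(p^e))^t, so C(s, k) vanishes
   for 0 < k < p^m when p^m divides s; since r <= p^m, this kills (x + y)^s and
   u^s in A, where u = (1 + x)(1 + y) - 1.  For t = x + y or t = u the products
   x^i t^j (i < r, j < s) are unitriangular with respect to the monomials
   x^i y^j, hence form a basis of A.  In the monomial coordinates of A the
   matrix J_r (x) J_s acts as multiplication by 1 + u, so the chains
   x^i, x^i u, ..., x^i u^(s-1) give r Jordan blocks of size s.  Conversely, if
   all r blocks have size s then u^s = 0 in A; but if p^e is the p-part of s and
   p^m does not divide s, then p^e < r and the coefficient of x^(p^e) y^(s-p^e)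
   in u^s is C(s, p^e), which is nonzero mod p. *)

From HB Require Import structures.
From mathcomp Require Import all_boot all_order all_algebra.
From mathcomp Require Import mxtens.
From mathcomp Require Import zify ring.
Set Implicit Arguments. Unset Strict Implicit. Unset Printing Implicit Defensive.
Import Order.TTheory GRing.Theory Num.Theory.
Local Open Scope ring_scope.

Section TruncatedIdeal.
Variables (F : fieldType) (r s : nat).
Local Notation PP := {poly {poly F}}.

Lemma xA_exp n : xA F ^+ n = ('X^n : {poly F})%:P.
Proof. by rewrite /xA rmorphXn. Qed.

Lemma congA0P (P : PP) :
  congA r s P 0 <-> (forall i j, (i < r)%N -> (j < s)%N -> (P`_j)`_i = 0).
Proof.
split.
  move=> [U [V]]; rewrite subr0 => -> i j ir js.
  by rewrite coefD xA_exp coefCM /yA coefXnM js addr0 coefXnM ir.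
move=> P0; rewrite /congA subr0.
exists (\poly_(j < s) drop_poly r (P`_j)), (drop_poly s P).
apply/polyP => j.
rewrite coefD xA_exp coefCM coef_poly /yA coefXnM.
rewrite -{1}(poly_take_drop s P) coefD coefMXn coef_take_poly.
case: ltnP => js; last by rewrite mulr0.
rewrite addr0 -{1}(poly_take_drop r (P`_j)).
have -> : take_poly r P`_j = 0.
  apply/polyP => i; rewrite coef_take_poly coef0.
  by case: ltnP => // ir; rewrite P0.
by rewrite add0r addr0 mulrC.
Qed.

Lemma congA00 : congA r s (0 : PP) 0.
Proof. by exists 0, 0; rewrite !mulr0 subr0 addr0. Qed.

Lemma congA0D (P Q : PP) : congA r s P 0 -> congA r s Q 0 -> congA r s (P + Q) 0.
Proof.
move=> [U1 [V1]]; rewrite subr0 => ->; move=> [U2 [V2]]; rewrite subr0 => ->.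
by rewrite /congA subr0; exists (U1 + U2), (V1 + V2); rewrite !mulrDr; ring.
Qed.

Lemma congA0N (P : PP) : congA r s P 0 -> congA r s (- P) 0.
Proof.
move=> [U [V]]; rewrite subr0 => ->.
by rewrite /congA subr0; exists (- U), (- V); rewrite !mulrN opprD.
Qed.

Lemma congA0_sum (I : finType) (f : I -> PP) :
  (forall i, congA r s (f i) 0) -> congA r s (\sum_i f i) 0.
Proof. by move=> f0; elim/big_ind: _ => //; [exact: congA00 | exact: congA0D]. Qed.

Lemma congA0Mr (P Q : PP) : congA r s P 0 -> congA r s (P * Q) 0.
Proof.
move=> [U [V]]; rewrite subr0 => ->.
by rewrite /congA subr0; exists (U * Q), (V * Q); rewrite mulrDl !mulrA.
Qed.

End TruncatedIdeal.

Section AffinePowers.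
Variable R : comNzRingType.

Lemma coef_affine_exp n (c d : R) j :
  (('X * c%:P + d%:P : {poly R}) ^+ n)`_j =
    if (j <= n)%N then (c ^+ j * d ^+ (n - j)) *+ 'C(n, j) else 0.
Proof.
rewrite addrC exprDn coef_sum.
rewrite (eq_bigr (fun i : 'I_n.+1 => if i == j :> nat then
   (c ^+ j * d ^+ (n - j)) *+ 'C(n, j) else 0)); last first.
  move=> i _; rewrite coefMn.
  have -> : (d%:P ^+ (n - i) * ('X * c%:P) ^+ i : {poly R}) =
            (c ^+ i * d ^+ (n - i))%:P * 'X^i.
    by rewrite rmorphM /= !rmorphXn /= exprMn mulrCA mulrC; congr (_ * _); rewrite mulrC.
  rewrite coefMXn coefC; case: (ltnP j i) => ji.
    by rewrite gtn_eqF // mul0rn.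
  case: (eqVneq (i : nat) j) => [<-|nij]; first by rewrite subnn.
  by rewrite ifF ?mul0rn // subn_eq0 leqNgt ltn_neqAle ji andbT negbK; exact: negbTE.
set K := c ^+ j * d ^+ (n - j) *+ 'C(n, j).
rewrite -(big_mkcond (fun i : 'I_n.+1 => (i : nat) == j) (fun _ => K)).
by rewrite (big_ord1_eq _ (fun=> K) j n.+1) ltnS.
Qed.

Lemma coef_1DX_exp n k : ((1 + 'X : {poly R}) ^+ n)`_k = ('C(n, k))%:R.
Proof.
have -> : (1 + 'X : {poly R}) = 'X * 1%:P + 1%:P by rewrite rmorph1 mulr1 addrC.
rewrite coef_affine_exp !expr1n mulr1; case: leqP => // kn.
by rewrite bin_small.
Qed.

Lemma coef0_exp1 (c : {poly R}) j : c`_0 = 1 -> (c ^+ j)`_0 = 1.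
Proof.
move=> c01; elim: j => [|j IHj]; first by rewrite expr0 coef1.
by rewrite exprS coef0M c01 IHj mulr1.
Qed.

End AffinePowers.

Section PcharBinomial.
Variables (F : fieldType) (p : nat).
Hypothesis pcharFp : p \in [pchar F].

Lemma binom_pexpM e t k :
  ('C(p ^ e * t, k))%:R = (if (p ^ e %| k)%N then ('C(t, k %/ p ^ e))%:R else 0 : F).
Proof.
have p_pr : prime p by exact: pcharf_prime pcharFp.
have pe_gt0 : (0 < p ^ e)%N by rewrite expn_gt0 prime_gt0.
have pchar_poly_p : p \in [pchar {poly F}] by rewrite pchar_poly.
have pe_pchar : (GRing.pchar {poly F}).-nat (p ^ e)%N.
  by rewrite (eq_pnat _ (pcharf_eq pchar_poly_p)) pnatX pnat_id.
rewrite -coef_1DX_exp exprM exprDn_pchar // expr1n.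
have -> : (1 + 'X ^+ (p ^ e) : {poly F}) ^+ t = ((1 + 'X) ^+ t) \Po 'X^(p ^ e).
  by rewrite rmorphXn /= rmorphD /= comp_polyC comp_polyX.
by rewrite coef_comp_poly_Xn // coef_1DX_exp.
Qed.

Lemma binom_pexp_dvd_eq0 m s k :
  (p ^ m %| s)%N -> (0 < k < p ^ m)%N -> ('C(s, k))%:R = 0 :> F.
Proof.
move=> pm_s /andP[k_gt0 k_lt]; rewrite -(divnK pm_s) mulnC binom_pexpM ifF //.
by apply/negbTE; apply/negP => /(dvdn_leq k_gt0); rewrite leqNgt k_lt.
Qed.

Lemma binom_pexpM_pexp_neq0 e t : ~~ (p %| t)%N -> ('C(p ^ e * t, p ^ e))%:R != 0 :> F.
Proof.
move=> p_t; have p_pr : prime p by exact: pcharf_prime pcharFp.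
have pe_gt0 : (0 < p ^ e)%N by rewrite expn_gt0 prime_gt0.
by rewrite binom_pexpM dvdnn divnn pe_gt0 bin1 -(dvdn_pcharf pcharFp).
Qed.

End PcharBinomial.

Section Generators.
Variable F : fieldType.
Local Notation PP := {poly {poly F}}.

Definition uA : PP := (1 + xA F) * (1 + yA F) - 1.

Lemma xA_addE : xA F + yA F = 'X * 1%:P + ('X)%:P.
Proof. by rewrite /xA /yA rmorph1 mulr1 addrC. Qed.

Lemma uAE : uA = 'X * (1 + 'X)%:P + ('X)%:P.
Proof. by rewrite /uA /xA /yA rmorphD rmorph1 /=; ring. Qed.

Lemma coef_xA_expM i (w : PP) a b :
  ((xA F ^+ i * w)`_b)`_a = if (a < i)%N then 0 else (w`_b)`_(a - i).
Proof. by rewrite xA_exp coefCM coefXnM. Qed.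

(* With the monomials x^a y^b ordered by b first and then by decreasing a,
   x^i (c y + d)^j has leading monomial x^i y^j with coefficient 1. *)
Lemma xA_affine_exp_triangular (c d : {poly F}) i j : c`_0 = 1 ->
  ((xA F ^+ i * ('X * c%:P + d%:P) ^+ j)`_j)`_i = 1 /\
  (forall a b, ((xA F ^+ i * ('X * c%:P + d%:P) ^+ j)`_b)`_a != 0 ->
       (b < j)%N \/ (b = j /\ (i <= a)%N)).
Proof.
move=> c01; split.
  by rewrite coef_xA_expM ltnn subnn coef_affine_exp leqnn subnn expr0 mulr1 binn coef0_exp1.
move=> a b; rewrite coef_xA_expM; case: ltnP => [_|ia]; first by rewrite eqxx.
rewrite coef_affine_exp.
by case: (ltngtP b j) => [bj|bj|->] /=; [left | rewrite coef0 eqxx | right].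
Qed.

Lemma coef_xA_add_exp n a b : (((xA F + yA F) ^+ n)`_b)`_a =
  if (b <= n)%N then (a == (n - b)%N)%:R *+ 'C(n, b) else 0.
Proof.
rewrite xA_addE coef_affine_exp; case: leqP => _; last by rewrite coef0.
by rewrite expr1n mul1r coefMn coefXn.
Qed.

Lemma coef_uA_exp n a b : ((uA ^+ n)`_b)`_a =
  if (b <= n)%N then ((1 + 'X) ^+ b * 'X ^+ (n - b))`_a *+ 'C(n, b) else 0.
Proof. by rewrite uAE coef_affine_exp; case: leqP => _; rewrite ?coef0 // coefMn. Qed.

Lemma xA_xA_add_exp_not_cong0 r s i : (i < r)%N -> (r <= s)%N ->
  ~ congA r s (xA F ^+ i * (xA F + yA F) ^+ s.-1) 0.
Proof.
move=> ir rs /congA0P /(_ i s.-1 ir).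
rewrite ltn_predL (leq_trans _ rs) ?(leq_ltn_trans _ ir) //.
have c01 : (1 : {poly F})`_0 = 1 by rewrite coef1.
rewrite xA_addE (proj1 (xA_affine_exp_triangular ('X) i s.-1 c01)).
by move/(_ isT)/eqP; rewrite oner_eq0.
Qed.

End Generators.

Section Nilpotency.
Variables (F : fieldType) (p : nat) (r s m : nat).
Hypotheses (pcharFp : p \in [pchar F]) (r_gt0 : (1 <= r)%N) (rs : (r <= s)%N).
Hypotheses (r_le_pm : (r <= p ^ m)%N)
  (m_min : forall k : nat, (r <= p ^ k)%N -> (m <= k)%N).

Lemma xA_add_exp_cong0 : (p ^ m %| s)%N -> congA r s ((xA F + yA F) ^+ s) 0.
Proof.
move=> pm_s; apply/congA0P => a b ar bs.
rewrite coef_xA_add_exp ltnW //; case: eqVneq => [a_sb|_]; last by rewrite mul0rn.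
rewrite -mulr_natr -bin_sub ?(ltnW bs) // (binom_pexp_dvd_eq0 pcharFp pm_s) ?mulr0 //.
by rewrite subn_gt0 bs -a_sb (leq_trans ar).
Qed.

Lemma uA_exp_cong0 : (p ^ m %| s)%N -> congA r s (uA F ^+ s) 0.
Proof.
move=> pm_s; apply/congA0P => a b ar bs.
rewrite coef_uA_exp ltnW // coefMXn; case: ltnP => [//|sb_a]; first by rewrite mul0rn.
rewrite -mulr_natr -bin_sub ?(ltnW bs) // (binom_pexp_dvd_eq0 pcharFp pm_s) ?mulr0 //.
by rewrite subn_gt0 bs (leq_ltn_trans sb_a) // (leq_trans ar).
Qed.

Lemma uA_exp_cong0_dvd : congA r s (uA F ^+ s) 0 -> (p ^ m %| s)%N.
Proof.
move=> us0; apply/negPn/negP => pm_s.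
have p_pr : prime p by exact: pcharf_prime pcharFp.
have s_gt0 : (0 < s)%N by apply: leq_trans r_gt0 rs.
have [t pt_coprime s_def] := pfactor_coprime p_pr s_gt0.
set e := logn p s in s_def.
have p_t : ~~ (p %| t)%N by rewrite -prime_coprime.
have pe_lt_r : (p ^ e < r)%N.
  rewrite ltnNge; apply/negP => r_le_pe; move/negP: pm_s; apply.
  by rewrite s_def dvdn_mull // dvdn_exp2l // m_min.
have pe_gt0 : (0 < p ^ e)%N by rewrite expn_gt0 prime_gt0.
have t_gt0 : (0 < t)%N by rewrite lt0n; apply: contraTneq s_gt0 => t0; rewrite s_def t0.
have pe_le_s : (p ^ e <= s)%N by rewrite s_def leq_pmull.
move/congA0P: us0 => /(_ (p ^ e)%N (s - p ^ e)%N pe_lt_r).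
rewrite ltn_subrL pe_gt0 s_gt0 => /(_ isT).
rewrite coef_uA_exp leq_subr subKn // coefMXn ltnn subnn coef_1DX_exp bin0.
rewrite bin_sub // s_def mulnC => /eqP; rewrite -mulr_natl mulr1.
by apply/negP; apply: binom_pexpM_pexp_neq0.
Qed.

End Nilpotency.

Section Span.
Variable F : fieldType.
Local Notation PP := {poly {poly F}}.
Local Notation t := (xA F + yA F).

Lemma evalT_wide (g : {poly F}) n : (size g <= n)%N ->
  evalT g = \sum_(j < n) (g`_j)%:P%:P * t ^+ j.
Proof.
move=> gn; rewrite /evalT (horner_coef_wide _ (leq_trans (size_poly _ _) gn)).
apply: eq_bigr => j _; rewrite coef_poly; case: ltnP => // gj.
by rewrite nth_default // !rmorph0.
Qed.

Lemma take_polyC_xA (g : {poly F}) r :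
  (take_poly r g)%:P = \sum_(i < r) (g`_i)%:P%:P * xA F ^+ i :> PP.
Proof.
rewrite /take_poly poly_def rmorph_sum; apply: eq_bigr => i _.
by rewrite -mul_polyC rmorphM /= xA_exp.
Qed.

(* Write a as a polynomial R in t = x + y with coefficients in F[x]; reducing
   each coefficient modulo x^r gives the required f. *)
Lemma congA_span r s (a : PP) : exists f : 'I_r -> {poly F},
  congA r s a (\sum_(i < r) xA F ^+ i * evalT (f i)).
Proof.
set R := a \Po ('X - xA F).
have aR : a = R \Po t.
  rewrite /R -comp_polyA comp_polyB comp_polyX /xA comp_polyC /yA.
  by rewrite addrC addKr comp_polyXr.
exists (fun i => \poly_(j < size R) (R`_j)`_i).
have -> : \sum_(i < r) xA F ^+ i * evalT (\poly_(j < size R) (R`_j)`_i)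
   = \sum_(j < size R) (take_poly r R`_j)%:P * t ^+ j.
  under eq_bigr do rewrite (evalT_wide (size_poly _ _)) mulr_sumr.
  rewrite exchange_big /=; apply: eq_bigr => j _.
  rewrite take_polyC_xA mulr_suml; apply: eq_bigr => i _.
  by rewrite coef_poly ltn_ord mulrCA mulrA.
exists (\sum_(j < size R) (drop_poly r R`_j)%:P * t ^+ j), 0.
rewrite mulr0 addr0 {1}aR comp_polyE -sumrB mulr_sumr; apply: eq_bigr => j _.
rewrite -mul_polyC -mulrBl mulrA; congr (_ * _).
by rewrite -rmorphB /= -{1}(poly_take_drop r R`_j) addrC addKr rmorphM /= xA_exp mulrC.
Qed.

End Span.

Section Independence.
Variable F : fieldType.
Local Notation PP := {poly {poly F}}.

Lemma coef_sum_polyCCM (I : finType) (c : I -> F) (w : I -> PP) a b :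
  ((\sum_i (c i)%:P%:P * w i)`_b)`_a = \sum_i c i * ((w i)`_b)`_a.
Proof. by rewrite !coef_sum; apply: eq_bigr => i _; rewrite !coefCM. Qed.

(* A family whose members have distinct leading monomials x^(a i) y^(b i)
   (for the order of xA_affine_exp_triangular) inside the box r x s is linearly
   independent modulo (x^r, y^s): the nonzero coefficient with the largest
   leading monomial could not be cancelled. *)
Lemma congA0_triangular_eq0 (I : finType) r s (a b : I -> nat) (w : I -> PP)
    (c : I -> F) :
  (forall i, a i < r)%N -> (forall i, b i < s)%N ->
  (forall i j, a i = a j -> b i = b j -> i = j) ->
  (forall i, ((w i)`_(b i))`_(a i) = 1) ->
  (forall i a' b', ((w i)`_b')`_a' != 0 ->
       (b' < b i)%N \/ (b' = b i /\ (a i <= a')%N)) ->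
  congA r s (\sum_i (c i)%:P%:P * w i) 0 -> forall i, c i = 0.
Proof.
move=> ar bs ab_inj w_lead w_tri /congA0P cw0 i0; apply/eqP/negPn/negP => ci0.
pose rank i := (b i * r + (r - a i))%N.
case: (@arg_maxnP I i0 (fun i => c i != 0) rank ci0) => j cj j_max.
have := cw0 (a j) (b j) (ar j) (bs j).
rewrite coef_sum_polyCCM (bigD1 j) //= w_lead mulr1 big1 ?addr0; first exact/eqP.
move=> i ij; case: (eqVneq (c i) 0) => [->|ci]; first by rewrite mul0r.
case: (eqVneq ((w i)`_(b j))`_(a j) 0) => [->|wij]; first by rewrite mulr0.
have := j_max i ci; rewrite /rank; have := ar i; have := ar j.
case: (w_tri i _ _ wij) => [b_lt | [b_eq a_le]] aj ai rank_le; first nia.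
by move/eqP: ij; case; apply: ab_inj => //; lia.
Qed.

Lemma congA0_affine_indep (c d : {poly F}) r s (k : 'I_r -> 'I_s -> F) :
  c`_0 = 1 ->
  congA r s (\sum_(ij : 'I_r * 'I_s) (k ij.1 ij.2)%:P%:P *
      (xA F ^+ ij.1 * ('X * c%:P + d%:P) ^+ ij.2)) 0 -> forall i j, k i j = 0.
Proof.
move=> c01 k0 i j.
apply: (congA0_triangular_eq0 (a := fun ij : 'I_r * 'I_s => nat_of_ord ij.1)
  (b := fun ij : 'I_r * 'I_s => nat_of_ord ij.2) _ _ _ _ _ k0 (i, j)).
- by move=> [].
- by move=> [].
- by move=> [a b] [a' b'] /= /val_inj -> /val_inj ->.
- by move=> [a b]; case: (xA_affine_exp_triangular d a b c01).
- by move=> [a b] a' b'; case: (xA_affine_exp_triangular d a b c01) => _; apply.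
Qed.

Lemma congA_indep p r s m (f : 'I_r -> {poly F}) :
  p \in [pchar F] -> (r <= p ^ m)%N -> (p ^ m %| s)%N ->
  congA r s (\sum_(i < r) xA F ^+ i * evalT (f i)) 0 ->
  forall i : 'I_r, congA r s (xA F ^+ i * evalT (f i)) 0.
Proof.
move=> pcharFp r_le_pm pm_s f0.
pose T i := \sum_(j < s) ((f i)`_j)%:P%:P * (xA F + yA F) ^+ j.
have evalT_T (i : 'I_r) : congA r s (xA F ^+ i * evalT (f i) - xA F ^+ i * T i) 0.
  rewrite (evalT_wide (leq_addl s (size (f i)))) big_split_ord /=.
  rewrite -mulrBr /T /= [X in X - _]addrC addrK mulr_sumr; apply: congA0_sum => k.
  rewrite exprD.
  have -> : forall a b c e : PP, a * (b * (c * e)) = c * (a * b * e) by move=> *; ring.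
  exact/congA0Mr/(xA_add_exp_cong0 pcharFp r_le_pm pm_s).
have T0 : congA r s (\sum_(i < r) xA F ^+ i * T i) 0.
  have -> : \sum_(i < r) xA F ^+ i * T i = \sum_(i < r) xA F ^+ i * evalT (f i)
       - \sum_(i < r) (xA F ^+ i * evalT (f i) - xA F ^+ i * T i).
    by rewrite -sumrB; apply: eq_bigr => i _; rewrite subKr.
  exact/(congA0D f0)/congA0N/congA0_sum.
have coef_f0 (i : 'I_r) (j : 'I_s) : (f i)`_j = 0.
  have c01 : (1 : {poly F})`_0 = 1 by rewrite coef1.
  apply: (congA0_affine_indep (d := 'X) (k := fun i j => (f i)`_j) c01).
  move: T0; rewrite /T; under eq_bigr do rewrite mulr_sumr.
  by rewrite pair_big /= -xA_addE; under eq_bigr do rewrite mulrCA.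
move=> i; have := evalT_T i.
have -> : T i = 0 by apply: big1 => j _; rewrite coef_f0 !rmorph0 mul0r.
by rewrite mulr0 subr0.
Qed.

End Independence.

Section Coordinates.
Variables (F : fieldType) (r s : nat).
Local Notation PP := {poly {poly F}}.

(* Coordinates in the monomial basis x^i y^j of A, indexed like the rows of the
   Kronecker product JJ. *)
Definition vecA (P : PP) : 'rV[F]_(r * s) :=
  \row_k (P`_((mxtens_unindex k).2))`_((mxtens_unindex k).1).

Lemma vecA_index P i j : vecA P 0 (mxtens_index (i, j)) = (P`_j)`_i.
Proof. by rewrite mxE mxtens_indexK. Qed.

Lemma vecA_eq0P P : vecA P = 0 <-> congA r s P 0.
Proof.
rewrite congA0P; split.
  move=> /rowP P0 i j ir js.
  by have := P0 (mxtens_index (Ordinal ir, Ordinal js)); rewrite vecA_index mxE.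
move=> P0; apply/rowP => k; case: (mxtens_indexP k) => i j.
by rewrite vecA_index mxE P0.
Qed.

Lemma vecAD P Q : vecA (P + Q) = vecA P + vecA Q.
Proof. by apply/rowP => k; rewrite !mxE !coefD. Qed.

Lemma vecAB P Q : vecA (P - Q) = vecA P - vecA Q.
Proof. by apply/rowP => k; rewrite !mxE !coefB. Qed.

Lemma vecA0 : vecA 0 = 0.
Proof. by apply/rowP => k; rewrite !mxE !coef0. Qed.

Lemma vecA_polyCCM c P : vecA (c%:P%:P * P) = c *: vecA P.
Proof. by apply/rowP => k; rewrite !mxE !coefCM. Qed.

Lemma vecA_sum (I : finType) (f : I -> PP) : vecA (\sum_i f i) = \sum_i vecA (f i).
Proof. exact: (big_morph _ vecAD vecA0). Qed.

Lemma sum_mxtens_index (f : 'I_(r * s) -> F) :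
  \sum_k f k = \sum_(i < r) \sum_(j < s) f (mxtens_index (i, j)).
Proof.
rewrite pair_big /= (reindex (@mxtens_index r s)) /=; last first.
  by exists (@mxtens_unindex r s) => x _; rewrite ?mxtens_indexK ?mxtens_unindexK.
by apply: eq_bigr => -[i j].
Qed.

Lemma sum_mul_delta n (f : 'I_n -> F) (b : 'I_n) : \sum_j f j * (j == b)%:R = f b.
Proof.
rewrite (bigD1 b) //= eqxx mulr1 big1 ?addr0 // => j /negPf ->.
by rewrite mulr0.
Qed.

Lemma sum_mul_jordan_col n (f : nat -> F) (a : 'I_n) :
  \sum_(i < n) f i * ((i == a :> nat) || (a == i.+1 :> nat))%:R
   = f a + (if a == 0 :> nat then 0 else f a.-1).
Proof.
have -> : \sum_(i < n) f i * ((i == a :> nat) || (a == i.+1 :> nat))%:R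
  = \sum_(i < n) f i * (i == a :> nat)%:R + \sum_(i < n) f i * (a == i.+1 :> nat)%:R.
  rewrite -big_split /=; apply: eq_bigr => i _.
  case: (eqVneq (i : nat) a) => [<-|_]; last by rewrite /= mulr0 add0r.
  by rewrite (ltn_eqF (ltnSn i)) /= mulr0 addr0.
congr (_ + _).
  under eq_bigr do rewrite mulr_natr mulrb.
  by rewrite -big_mkcond big_ord1_eq ltn_ord.
case: a => [[|a] a_lt] /=.
  by rewrite big1 // => i _; rewrite mulr0.
under eq_bigr do rewrite mulr_natr mulrb eqSS eq_sym.
by rewrite -big_mkcond big_ord1_eq ltnW.
Qed.

Lemma vecA_mul_jordan_tens1 P :
  vecA P *m (jordan_mx F r *t 1%:M) = vecA (P * (1 + xA F)).
Proof.
apply/rowP => k; case: (mxtens_indexP k) => a b.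
rewrite mxE sum_mxtens_index vecA_index.
under eq_bigr do under eq_bigr do rewrite vecA_index tensmxE !mxE mulrA.
under eq_bigr do rewrite (sum_mul_delta (fun j => (P`_j)`__ * _)).
rewrite (sum_mul_jordan_col (fun i => P`_b`_i)) mulrDr mulr1 coefD /xA coefMC.
by rewrite coefD coefMX; case: (a : nat).
Qed.

Lemma vecA_mul_tens1_jordan P :
  vecA P *m (1%:M *t jordan_mx F s) = vecA (P * (1 + yA F)).
Proof.
apply/rowP => k; case: (mxtens_indexP k) => a b.
rewrite mxE sum_mxtens_index vecA_index.
under eq_bigr do under eq_bigr do rewrite vecA_index tensmxE !mxE.
rewrite (eq_bigr (fun i : 'I_r => (\sum_(j < s) P`_j`_i *
    ((j == b :> nat) || (b == j.+1 :> nat))%:R) * (i == a)%:R)); last first.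
  by move=> i _; rewrite mulr_suml; apply: eq_bigr => j _; rewrite mulrCA mulrC.
rewrite (sum_mul_delta (fun i : 'I_r => \sum_(j < s) P`_j`_i * _)).
rewrite (sum_mul_jordan_col (fun j => P`_j`_a)) mulrDr mulr1 coefD /yA coefMX.
by case: (b : nat) => [|b'] /=; rewrite ?coef0 ?addr0 // coefD.
Qed.

Lemma vecA_mulJJ P : vecA P *m JJ F r s = vecA (P * ((1 + xA F) * (1 + yA F))).
Proof.
rewrite /JJ -[jordan_mx F r]mulmx1 -[jordan_mx F s]mul1mx -tensmx_mul.
by rewrite mulmxA vecA_mul_jordan_tens1 vecA_mul_tens1_jordan mulrA.
Qed.

Lemma vecA_mulJJ_sub1_exp P n :
  vecA P *m (JJ F r s - 1%:M) ^+ n = vecA (P * uA F ^+ n).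
Proof.
elim: n P => [|n IHn] P; first by rewrite !expr0 mulr1 mulmx1.
rewrite exprS -mulmxE mulmxA mulmxBr mulmx1 vecA_mulJJ -vecAB IHn.
by congr vecA; rewrite /uA exprS; ring.
Qed.

End Coordinates.

Section JordanBlocks.
Variable F : fieldType.

Lemma row_free_sq_inv n n' (P : 'M[F]_(n, n')) : n = n' -> row_free P ->
  exists Q : 'M[F]_(n', n), P *m Q = 1%:M /\ Q *m P = 1%:M.
Proof.
move=> nn'; subst n' => Pfree; exists (invmx P).
by rewrite mulmxV ?mulVmx // -row_free_unit.
Qed.

Lemma mxdiagM n (p_ : 'I_n -> nat) (A B : forall i, 'M[F]_(p_ i)) :
  mxdiag A *m mxdiag B = mxdiag (fun i => A i *m B i).
Proof.
rewrite {2}/mxdiag mul_mxdiag_mxblock /mxdiag; apply: eq_mxblock => i j.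
case: eqVneq => [<-|_]; last by rewrite mulmx0.
by rewrite !conform_mx_id.
Qed.

Lemma mxdiagX n (p_ : 'I_n -> nat) (A : forall i, 'M[F]_(p_ i)) k :
  mxdiag A ^+ k = mxdiag (fun i => A i ^+ k).
Proof.
elim: k => [|k IHk].
  rewrite expr0; transitivity (mxdiag (fun i => (1%:M : 'M[F]_(p_ i)))).
    by rewrite mxdiagZ.
  by apply: eq_mxdiag => i; rewrite expr0.
rewrite exprS -mulmxE IHk mxdiagM; apply: eq_mxdiag => i.
by rewrite exprS mulmxE.
Qed.

Lemma sum_jordan_row_mul n (f : nat -> F) (j : 'I_n) :
  \sum_(l < n) ((j == l :> nat) || (l == j.+1 :> nat))%:R * f l
   = f j + (if (j.+1 < n)%N then f j.+1 else 0).
Proof.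
have -> : \sum_(l < n) ((j == l :> nat) || (l == j.+1 :> nat))%:R * f l
  = \sum_(l < n) (l == j :> nat)%:R * f l + \sum_(l < n) (l == j.+1 :> nat)%:R * f l.
  rewrite -big_split /=; apply: eq_bigr => l _.
  case: (eqVneq (l : nat) j) => [->|_]; last by rewrite /= mul0r add0r.
  by rewrite /= (ltn_eqF (ltnSn j)) /= mul0r addr0.
congr (_ + _); under eq_bigr do rewrite mulr_natl mulrb.
  by rewrite -big_mkcond big_ord1_eq ltn_ord.
by rewrite -big_mkcond big_ord1_eq.
Qed.

Lemma jordan_sub1_exp_entry n k (i j : 'I_n) :
  ((jordan_mx F n - 1) ^+ k) i j = (j == (i + k)%N :> nat)%:R.
Proof.
elim: k i j => [|k IHk] i j; first by rewrite expr0 addn0 mxE eq_sym.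
rewrite exprSr -mulmxE mxE.
under eq_bigr do rewrite IHk !mxE.
have -> : \sum_(l < n) (l == (i + k)%N :> nat)%:R *
   (((l == j :> nat) || (j == l.+1 :> nat))%:R - (l == j :> nat)%:R)
   = \sum_(l < n) (if l == (i + k)%N :> nat then (j == (i + k).+1 :> nat)%:R else 0 : F).
  apply: eq_bigr => l _; case: eqP => [->|_]; last by rewrite mul0r.
  rewrite mul1r; case: (eqVneq (i + k)%N j) => [<-|_] /=; last by rewrite subr0.
  by rewrite (ltn_eqF (ltnSn _)) subrr.
rewrite -(big_mkcond (fun l : 'I_n => (l : nat) == (i + k)%N)
                     (fun=> (j == (i + k).+1 :> nat)%:R)).
rewrite (big_ord1_eq _ (fun=> (j == (i + k).+1 :> nat)%:R) (i + k)%N n) addnS.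
case: ltnP => // n_le.
by rewrite ltn_eqF // ltnS (leq_trans (ltnW (ltn_ord j)) n_le).
Qed.

Lemma jordan_sub1_exp_eq0 n k : (n <= k)%N -> (jordan_mx F n - 1) ^+ k = 0.
Proof.
move=> nk; apply/matrixP => i j; rewrite jordan_sub1_exp_entry mxE.
by rewrite ltn_eqF // (leq_trans (ltn_ord j)) // (leq_trans nk) // leq_addl.
Qed.

End JordanBlocks.

Section JordanType.
Variables (F : fieldType) (r s : nat).

Definition uA_chain_mx i n : 'M[F]_(n, r * s) :=
  \matrix_(j < n, k < r * s) vecA r s (xA F ^+ i * uA F ^+ j) 0 k.

Lemma uA_chain_mxJJ i n : congA r s (uA F ^+ s) 0 -> n = s ->
  uA_chain_mx i n *m JJ F r s = jordan_mx F n *m uA_chain_mx i n.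
Proof.
move=> us0 ->; apply/matrixP => j k.
have -> : (uA_chain_mx i s *m JJ F r s) j k =
          (vecA r s (xA F ^+ i * uA F ^+ j) *m JJ F r s) 0 k.
  by rewrite !mxE; apply: eq_bigr => l _; rewrite !mxE.
rewrite vecA_mulJJ.
have -> : (1 + xA F) * (1 + yA F) = 1 + uA F by rewrite /uA [RHS]addrC subrK.
rewrite mulrDr mulr1 vecAD -mulrA -exprSr mxE [in RHS]mxE.
under [in RHS]eq_bigr do rewrite mxE mxE.
rewrite (sum_jordan_row_mul (fun l => vecA r s (xA F ^+ i * uA F ^+ l) 0 k)).
case: ltnP => j_last //; congr (_ + _).
have -> : j.+1 = s by apply/eqP; rewrite eqn_leq j_last ltn_ord.
have := congA0Mr (xA F ^+ i) us0; rewrite mulrC => /vecA_eq0P ->.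
by rewrite mxE.
Qed.

Lemma sorted_geq_nseq n (x : nat) : sorted geq (nseq n x).
Proof. by case: n => //= n; elim: n => //= n IHn; rewrite leqnn. Qed.

Lemma sum_nth_nseq : (\sum_(i < size (nseq r s)) nth 0%N (nseq r s) i = r * s)%N.
Proof.
rewrite size_nseq; under eq_bigr do rewrite nth_nseq ltn_ord.
by rewrite sum_nat_const card_ord.
Qed.

(* The rows of P are the coordinates of the basis x^i u^j of A, and u^s = 0
   makes each chain x^i u^j (j < s) a single Jordan block. *)
Lemma JJ_jordan_type_nseq : (0 < s)%N -> congA r s (uA F ^+ s) 0 ->
  jordan_type (JJ F r s) (nseq r s).
Proof.
move=> s_gt0 us0; set lam := nseq r s.
split; first exact: sorted_geq_nseq.
split; first by rewrite all_nseq s_gt0 orbT.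
pose P := mxcol (fun i : 'I_(size lam) => uA_chain_mx i (nth 0%N lam i)).
have row_P k : row k P = vecA r s (xA F ^+ tagnat.sig1 k * uA F ^+ tagnat.sig2 k).
  by rewrite row_mxcol; apply/rowP => l; rewrite !mxE.
have Pfree : row_free P.
  apply/inj_row_free => v vP0.
  have : congA r s (\sum_k (v 0 k)%:P%:P *
                    (xA F ^+ tagnat.sig1 k * uA F ^+ tagnat.sig2 k)) 0.
    apply/vecA_eq0P; rewrite -vP0 vecA_sum mulmx_sum_row.
    by apply: eq_bigr => k _; rewrite vecA_polyCCM row_P.
  rewrite uAE => v0; apply/rowP => k; rewrite mxE.
  have c01 : (1 + 'X : {poly F})`_0 = 1 by rewrite coefD coef1 coefX addr0.
  apply: (congA0_triangular_eq0 (a := fun k => nat_of_ord (tagnat.sig1 k))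
           (b := fun k => nat_of_ord (tagnat.sig2 k)) _ _ _ _ _ v0).
  - by move=> k'; rewrite -(size_nseq r s).
  - move=> k'; apply: leq_trans (ltn_ord (tagnat.sig2 k')) _.
    by rewrite nth_nseq -[X in (_ < X)%N](size_nseq r s) ltn_ord.
  - move=> k1 k2 sig1_eq sig2_eq; apply: val_inj => /=.
    rewrite (tagnat.rect k1) (tagnat.rect k2) sig2_eq.
    by have -> : tagnat.sig1 k1 = tagnat.sig1 k2 by apply: val_inj.
  - by move=> k'; case: (xA_affine_exp_triangular ('X) (tagnat.sig1 k') (tagnat.sig2 k') c01).
  - move=> k' a b.
    by case: (xA_affine_exp_triangular ('X) (tagnat.sig1 k') (tagnat.sig2 k') c01) => _; apply.
have [Q [PQ QP]] := row_free_sq_inv sum_nth_nseq Pfree.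
have PJJ : P *m JJ F r s = jordan_blocks F lam *m P.
  rewrite /jordan_blocks mul_mxdiag_mxcol mxcol_mul; apply: eq_mxcol => i.
  by apply: uA_chain_mxJJ => //; rewrite nth_nseq -(size_nseq r s) ltn_ord.
exists P, Q; split => //; split => //.
by rewrite PJJ -mulmxA PQ mulmx1.
Qed.

(* If all Jordan blocks of JJ have size s then (JJ - 1)^s = 0, and applying it
   to the coordinates of 1 gives u^s = 0 in A. *)
Lemma deviation0_uA_exp_cong0 lam : jordan_type (JJ F r s) lam ->
  deviation s lam = nseq r 0 -> congA r s (uA F ^+ s) 0.
Proof.
move=> [_ [_ [P [Q [PQ [QP PJJQ]]]]]] lam_dev.
have lam_size : size lam = r.
  by have := congr1 size lam_dev; rewrite size_map size_nseq.
have lam_s i : (i < size lam)%N -> nth 0%N lam i = s.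
  move=> i_lt; have := congr1 (fun l => nth (0 : int) l i) lam_dev.
  rewrite /deviation (nth_map 0%N) // nth_nseq -lam_size i_lt.
  by move/eqP; rewrite subr_eq0 eqz_nat => /eqP.
set Jb := jordan_blocks F lam in PJJQ.
have JJ_sub1 : JJ F r s - 1%:M = Q *m (Jb - 1%:M) *m P.
  have JJ_conj : JJ F r s = Q *m Jb *m P.
    by rewrite -PJJQ !mulmxA QP mul1mx -mulmxA QP mulmx1.
  by rewrite JJ_conj mulmxBr mulmx1 mulmxBl QP.
have JJ_sub1_exp k : (JJ F r s - 1%:M) ^+ k = Q *m (Jb - 1%:M) ^+ k *m P.
  elim: k => [|k IHk]; first by rewrite !expr0 mulmx1 QP.
  rewrite exprS -mulmxE IHk JJ_sub1 exprS -mulmxE.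
  by rewrite !mulmxA -[Q *m _ *m P *m Q]mulmxA PQ mulmx1.
have Jb_sub1_exp : (Jb - 1%:M) ^+ s = 0.
  rewrite /Jb /jordan_blocks -(mxdiagZ (p_ := fun i : 'I_(size lam) => nth 0%N lam i) 1).
  rewrite -mxdiagB mxdiagX -[RHS](mxdiag0 (p_ := fun i : 'I_(size lam) => nth 0%N lam i)).
  by apply: eq_mxdiag => i; apply: jordan_sub1_exp_eq0; rewrite lam_s.
apply/vecA_eq0P; rewrite -[uA F ^+ s]mul1r -vecA_mulJJ_sub1_exp.
by rewrite JJ_sub1_exp Jb_sub1_exp mulmx0 mul0mx mulmx0.
Qed.

End JordanType.

Theorem lemma10 (F : fieldType) (p : nat) (hp : prime p) (hchar : p \in [pchar F])
  (r s m : nat) (hr : (1 <= r)%N) (hrs : (r <= s)%N)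
  (hm : (r <= p ^ m)%N) (hmmin : forall k : nat, (r <= p ^ k)%N -> (m <= k)%N) :
  (* (a) *)
  ((p ^ m %| s)%N ->
     congA r s ((xA F + yA F) ^+ s) 0
     /\ (forall a : {poly {poly F}}, exists f : 'I_r -> {poly F},
           congA r s a (\sum_(i < r) xA F ^+ i * evalT (f i)))
     /\ (forall f : 'I_r -> {poly F},
           congA r s (\sum_(i < r) xA F ^+ i * evalT (f i)) 0 ->
           forall i : 'I_r, congA r s (xA F ^+ i * evalT (f i)) 0)
     /\ (forall i : nat, (i < r)%N ->
           ~ congA r s (xA F ^+ i * (xA F + yA F) ^+ s.-1) 0)
     /\ (exists lam : seq nat, jordan_type (JJ F r s) lam
           /\ deviation s lam = nseq r 0))
  /\
  (* (b) *)
  (forall lam : seq nat, jordan_type (JJ F r s) lam ->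
     deviation s lam = nseq r 0 -> (p ^ m %| s)%N).
Proof.
have s_gt0 : (0 < s)%N := leq_trans hr hrs.
split=> [pm_s|lam lam_type lam_dev].
  split; first exact: xA_add_exp_cong0 hchar hm pm_s.
  split; first exact: congA_span.
  split; first by move=> f; exact: congA_indep hchar hm pm_s.
  split; first by move=> i ir; exact: xA_xA_add_exp_not_cong0 ir hrs.
  exists (nseq r s); split.
    exact/(JJ_jordan_type_nseq s_gt0)/(uA_exp_cong0 hchar hm pm_s).
  by rewrite /deviation map_nseq subrr.
exact/(uA_exp_cong0_dvd hchar hr hrs hmmin)/(deviation0_uA_exp_cong0 lam_type).
Qed.
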